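(* Let $A$ be a $K$-algebra and $n\ge1$. (1) The algebra $\mathbb{S}_n\otimes_K A$ is prime iff $A$ is prime. (2) An ideal $\mathfrak p$ of $A$ is prime iff the ideal $\mathbb{S}_n\otimes\mathfrak p$ of $\mathbb{S}_n\otimes A$ is prime.
   Context: $K$ is a field. $\mathbb{S}_n$ is the $K$-algebra generated by $x_1,\dots,x_n,y_1,\dots,y_n$ subject to the defining relations $y_ix_i=1$ for all $i$, and $[x_i,y_j]=[x_i,x_j]=[y_i,y_j]=0$ for all $i\ne j$. *)

From HB Require Import structures.
From mathcomp Require Import all_boot all_order all_algebra.
Set Implicit Arguments. Unset Strict Implicit. Unset Printing Implicit Defensive.
Import GRing.Theory.
Local Open Scope ring_scope.

Section Defs.
Variable K : fieldType.

Definition alg_morph (A B : algType K) (f : A -> B) : Prop :=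
  f 1 = 1 /\ (forall a b, f (a * b) = f a * f b) /\
  (forall (k : K) a b, f (k *: a + b) = k *: f a + f b).

Definition klinear (U V : lmodType K) (f : U -> V) : Prop :=
  forall (k : K) u v, f (k *: u + v) = k *: f u + f v.

Definition Sn_relations (n : nat) (B : algType K) (x y : 'I_n -> B) : Prop :=
  (forall i, y i * x i = 1) /\
  (forall i j, i != j ->
     [/\ x i * y j = y j * x i, x i * x j = x j * x i & y i * y j = y j * y i]).

(* (S, x, y) is THE algebra S_n generated by x_1..x_n, y_1..y_n subject to
   the defining relations: universal property of the presentation. *)
Definition is_Sn (n : nat) (S : algType K) (x y : 'I_n -> S) : Prop :=
  Sn_relations x y /\
  forall (B : algType K) (xb yb : 'I_n -> B), Sn_relations xb yb ->
    exists f : S -> B,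
      [/\ alg_morph f, (forall i, f (x i) = xb i /\ f (y i) = yb i) &
          forall g : S -> B, alg_morph g ->
            (forall i, g (x i) = xb i /\ g (y i) = yb i) -> forall s, g s = f s].

Definition bilinear_map (S A : algType K) (V : lmodType K) (f : S -> A -> V) : Prop :=
  (forall a, klinear (fun s : S => f s a)) /\ (forall s, klinear (f s)).

(* (T, iS, iA) is the tensor product algebra S (x)_K A, with
   iS s * iA a playing the role of s (x) a:  T is the tensor product of the
   underlying vector spaces (universal bilinear property) and the algebra
   structure is (s (x) a)(s' (x) a') = ss' (x) aa'. *)
Definition is_tensor_alg (S A T : algType K) (iS : S -> T) (iA : A -> T) : Prop :=
  [/\ alg_morph iS, alg_morph iA,
      (forall s a, iS s * iA a = iA a * iS s) &
      forall (V : lmodType K) (f : S -> A -> V), bilinear_map f ->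
        exists g : T -> V,
          [/\ klinear g, (forall s a, g (iS s * iA a) = f s a) &
              forall g' : T -> V, klinear g' ->
                (forall s a, g' (iS s * iA a) = f s a) -> forall t, g' t = g t]].

Definition is_ideal (R : nzRingType) (I : R -> Prop) : Prop :=
  [/\ I 0, (forall a b, I a -> I b -> I (a + b)) &
      (forall r a, I a -> I (r * a) /\ I (a * r))].

Definition ideal_prod (R : nzRingType) (I J : R -> Prop) : R -> Prop :=
  fun t => exists s : seq (R * R),
    (forall p, p \in s -> I p.1 /\ J p.2) /\ t = \sum_(p <- s) p.1 * p.2.

Definition subpred (R : Type) (I J : R -> Prop) : Prop := forall r, I r -> J r.

Definition prime_ideal (R : nzRingType) (P : R -> Prop) : Prop :=
  [/\ is_ideal P, ~ (forall r, P r) &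
      forall I J : R -> Prop, is_ideal I -> is_ideal J ->
        subpred (ideal_prod I J) P -> subpred I P \/ subpred J P].

Definition prime_ring (R : nzRingType) : Prop := prime_ideal (fun r : R => r = 0).

(* The ideal S (x) p of S (x) A: the image of S (x)_K p, i.e. the set of
   finite sums of s (x) a with a in p. *)
Definition tensor_ideal (S A T : algType K) (iS : S -> T) (iA : A -> T)
    (p : A -> Prop) : T -> Prop :=
  fun t => exists l : seq (S * A),
    (forall q, q \in l -> p q.2) /\ t = \sum_(q <- l) iS q.1 * iA q.2.

End Defs.

(* The proof rests on a compression phenomenon in S_n.  Let e_i = 1 - x_i y_i
   and e = prod_i e_i.  Since y_i x_i = 1, each e_i is an idempotent with
   e_i x_i = 0 = y_i e_i, and for every s in S_n
     (prod_i e_i y_i^(al_i)) * s * (prod_i x_i^(be_i) e_i) = coeff al be s *: e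
   for K-linear forms coeff al be that jointly separate the points of S_n
   (checked on the monomials x^g y^d, compressing by a monomial of minimal
   degree), while e != 0 (checked in a representation of S_n by shift
   operators on functions N^n -> K).  In T = S_n (x) A, compression of t
   yields e (x) coeffT al be t, and t lies in S_n (x) p iff every
   coeffT al be t lies in p.  Primeness then transfers in both directions by
   pulling ideals of T back along a |-> e (x) a; part (1) is part (2) for the
   zero ideal. *)

From Pilot Require Import Defs.
From HB Require Import structures.
From mathcomp Require Import all_boot all_order all_algebra.
From mathcomp Require Import boolp zify.
Set Implicit Arguments. Unset Strict Implicit. Unset Printing Implicit Defensive.
Import GRing.Theory.
Local Open Scope ring_scope.

Section KLinear.
Variables (K : fieldType) (U V : lmodType K) (f : U -> V).
Hypothesis hf : klinear f.

Lemma klinear0 : f 0 = 0.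
Proof.
have := hf 1 0 0; rewrite !scale1r !addr0 => /eqP.
by rewrite eq_sym -subr_eq0 addrK => /eqP.
Qed.

Lemma klinearD u v : f (u + v) = f u + f v.
Proof. by rewrite -{1}[u]scale1r hf scale1r. Qed.

Lemma klinearZ k u : f (k *: u) = k *: f u.
Proof. by rewrite -[k *: u]addr0 hf klinear0 addr0. Qed.

Lemma klinearB u v : f (u - v) = f u - f v.
Proof. by rewrite klinearD -scaleN1r klinearZ scaleN1r. Qed.

Lemma klinear_sum (I : Type) (r : seq I) (F : I -> U) :
  f (\sum_(i <- r) F i) = \sum_(i <- r) f (F i).
Proof. by elim: r => [|i r IH]; rewrite ?big_nil ?klinear0 // !big_cons klinearD IH. Qed.
End KLinear.

Section AlgMorphism.
Variables (K : fieldType) (A B : algType K) (f : A -> B).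
Hypothesis hf : alg_morph f.

Lemma alg_morph_klinear : klinear f. Proof. by case: hf => _ []. Qed.
Lemma alg_morph1 : f 1 = 1. Proof. by case: hf. Qed.
Lemma alg_morphM a b : f (a * b) = f a * f b. Proof. by case: hf => _ []. Qed.

Lemma alg_morph_prod (I : Type) (r : seq I) (F : I -> A) :
  f (\prod_(i <- r) F i) = \prod_(i <- r) f (F i).
Proof. by elim: r => [|i r IH]; rewrite ?big_nil ?alg_morph1 // !big_cons alg_morphM IH. Qed.
End AlgMorphism.

Section IdealFacts.
Variables (K : fieldType) (A : algType K) (p : A -> Prop).
Hypothesis hp : is_ideal p.

Lemma ideal0 : p 0. Proof. by case: hp. Qed.
Lemma idealD a b : p a -> p b -> p (a + b). Proof. by case: hp => _ h _; apply: h. Qed.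
Lemma idealMl r a : p a -> p (r * a). Proof. by case: hp => _ _ h /(h r) []. Qed.
Lemma idealMr r a : p a -> p (a * r). Proof. by case: hp => _ _ h /(h r) []. Qed.
Lemma idealZ k a : p a -> p (k *: a).
Proof. by move=> h; rewrite -[a]mul1r scalerAl; apply: idealMl. Qed.
Lemma idealB a b : p a -> p b -> p (a - b).
Proof. by move=> ha hb; rewrite -scaleN1r; apply: idealD => //; apply: idealZ. Qed.

Lemma ideal_sum (I : eqType) (r : seq I) (F : I -> A) :
  (forall i, i \in r -> p (F i)) -> p (\sum_(i <- r) F i).
Proof.
elim: r => [|i r IH] h; first by rewrite big_nil; exact: ideal0.
rewrite big_cons; apply: idealD; first by apply: h; rewrite mem_head.
by apply: IH => j hj; apply: h; rewrite in_cons hj orbT.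
Qed.
End IdealFacts.

(* Classically, any predicate closed under the algebra operations carves out
   a subalgebra; this turns the universal properties of S_n and of the
   tensor product into induction principles. *)
(* The closedness proof is a parameter of the carrier type so that the
   instances below can refer to it. *)
Section SubmoduleOfPredicate.
Variables (K : fieldType) (V : lmodType K) (Q : V -> Prop).

Definition subsemimod_pred (_ : GRing.subsemimod_closed [pred v | `[< Q v >]]) :=
  {v : V | `[< Q v >]}.
Variable hQ : GRing.subsemimod_closed [pred v | `[< Q v >]].
HB.instance Definition _ := [isSub of subsemimod_pred hQ for @sval V _].
HB.instance Definition _ := [Choice of subsemimod_pred hQ by <:].
HB.instance Definition _ :=
  GRing.SubChoice_isSubLmodule.Build K V _ (subsemimod_pred hQ) hQ.
End SubmoduleOfPredicate.

Section SubalgebraOfPredicate.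
Variables (K : fieldType) (S : algType K) (Q : S -> Prop).

Definition subsemialg_pred (_ : GRing.subsemialg_closed [pred s | `[< Q s >]]) :=
  {s : S | `[< Q s >]}.
Variable hQ : GRing.subsemialg_closed [pred s | `[< Q s >]].
HB.instance Definition _ := [isSub of subsemialg_pred hQ for @sval S _].
HB.instance Definition _ := [Choice of subsemialg_pred hQ by <:].
HB.instance Definition _ :=
  GRing.SubChoice_isSubAlgebra.Build K S _ (subsemialg_pred hQ) hQ.
End SubalgebraOfPredicate.

Lemma Sn_ind (K : fieldType) (n : nat) (S : algType K) (x y : 'I_n -> S)
    (hS : is_Sn x y) (Q : S -> Prop)
    (Q1 : Q 1) (Q0 : Q 0) (QD : forall u v, Q u -> Q v -> Q (u + v))
    (QZ : forall k u, Q u -> Q (k *: u)) (QM : forall u v, Q u -> Q v -> Q (u * v))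
    (Qx : forall i, Q (x i)) (Qy : forall i, Q (y i)) :
  forall s, Q s.
Proof.
have hQ : GRing.subsemialg_closed [pred s | `[< Q s >]].
  split; rewrite ?unfold_in /=; first exact/asboolP.
  - split; rewrite ?unfold_in /=; first exact/asboolP.
    by move=> u v; rewrite !unfold_in /= => /asboolP ? /asboolP ?; apply/asboolP; auto.
  - by move=> k u; rewrite !unfold_in /= => /asboolP ?; apply/asboolP; auto.
  - by move=> u v; rewrite !unfold_in /= => /asboolP ? /asboolP ?; apply/asboolP; auto.
pose D := subsemialg_pred hQ.
pose inD (s : S) (hs : Q s) : D := exist _ s (introT (asboolP _) hs).
have [[hyx hxy] hU] := hS.
have relD : Sn_relations (fun i => inD _ (Qx i)) (fun i => inD _ (Qy i)).
  split=> [i|i j /hxy [h1 h2 h3]]; first by apply: val_inj; rewrite /= hyx.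
  by split; apply: val_inj.
have [f [[f1 [fM fL]] fgen _]] := hU D _ _ relD.
have [f0 [_ _ uniq_id]] := hU S x y (conj hyx hxy).
have val_f : alg_morph (fun s => val (f s)).
  by split; [rewrite f1 | split=> [a b|k a b]; rewrite ?fM ?fL].
(* val \o f and id both fix the generators, so they agree on S. *)
move=> s; have val_f_eq := uniq_id _ val_f (fun i => let: conj a b := fgen i in
                                          conj (f_equal val a) (f_equal val b)) s.
have id_eq := uniq_id id ltac:(by []) (fun i => conj erefl erefl) s.
by have := valP (f s); rewrite /= val_f_eq -id_eq => /asboolP.
Qed.

Lemma tensor_ind (K : fieldType) (S A T : algType K) (iS : S -> T) (iA : A -> T)
    (hT : is_tensor_alg iS iA) (Q : T -> Prop)
    (Q0 : Q 0) (QD : forall u v, Q u -> Q v -> Q (u + v))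
    (QZ : forall k u, Q u -> Q (k *: u)) (Qt : forall s a, Q (iS s * iA a)) :
  forall t, Q t.
Proof.
have hQ : GRing.subsemimod_closed [pred t | `[< Q t >]].
  split; first split; rewrite ?unfold_in /=; first exact/asboolP.
  - by move=> u v; rewrite !unfold_in /= => /asboolP ? /asboolP ?; apply/asboolP; auto.
  - by move=> k u; rewrite !unfold_in /= => /asboolP ?; apply/asboolP; auto.
pose W := subsemimod_pred hQ.
pose pure s a : W := exist _ (iS s * iA a) (introT (asboolP _) (Qt s a)).
have [[_ [_ iSL]] [_ [_ iAL]] _ hU] := hT.
have pure_bil : bilinear_map pure.
  split=> [a|s] k u v; apply: val_inj => /=.
    by rewrite iSL mulrDl scalerAl.
  by rewrite iAL mulrDr scalerAr.
have [g [gL gpure _]] := hU W _ pure_bil.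
have tensor_bil : bilinear_map (fun s a => iS s * iA a).
  split=> [a|s] k u v /=; first by rewrite iSL mulrDl scalerAl.
  by rewrite iAL mulrDr scalerAr.
have [g0 [_ _ uniq_id]] := hU T _ tensor_bil.
have lin_val : klinear (fun t => val (g t)) by move=> k u v; rewrite gL.
have lin_id : klinear (@id T) by [].
(* val \o g and id agree on pure tensors, hence everywhere. *)
move=> t; have val_g_eq : val (g t) = t.
  have id_eq := uniq_id _ lin_id (fun s a => erefl) t.
  by rewrite (uniq_id _ lin_val) -?id_eq // => s a; rewrite gpure.
by have := valP (g t); rewrite /= val_g_eq => /asboolP.
Qed.

(* In any ring, b * a = 1 makes e = 1 - a * b an idempotent killing a on the
   right and b on the left; products b^k a^m collapse, so e w e is 0 or e
   for any word w = b^k a^c b^d a^m.  This is the one-index case of the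
   compression argument for S_n. *)
Section OneSidedInverse.
Variables (R : nzRingType) (a b : R).
Hypothesis ba1 : b * a = 1.

Definition proj_ab := 1 - a * b.

Lemma proj_ab_a : proj_ab * a = 0.
Proof. by rewrite /proj_ab mulrBl mul1r -mulrA ba1 mulr1 subrr. Qed.

Lemma b_proj_ab : b * proj_ab = 0.
Proof. by rewrite /proj_ab mulrBr mulr1 mulrA ba1 mul1r subrr. Qed.

Lemma proj_ab_idem : proj_ab * proj_ab = proj_ab.
Proof. by rewrite {1}/proj_ab mulrBl mul1r -mulrA b_proj_ab mulr0 subr0. Qed.

Lemma proj_ab_aX k : (0 < k)%N -> proj_ab * a ^+ k = 0.
Proof. by case: k => // k _; rewrite exprS mulrA proj_ab_a mul0r. Qed.

Lemma bX_proj_ab k : (0 < k)%N -> b ^+ k * proj_ab = 0.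
Proof. by case: k => // k _; rewrite exprSr -mulrA b_proj_ab mulr0. Qed.

Lemma bXaX k m : b ^+ k * a ^+ m = if (m <= k)%N then b ^+ (k - m) else a ^+ (m - k).
Proof.
elim: m k => [|m IH] k; first by rewrite expr0 mulr1 subn0.
case: k => [|k]; first by rewrite expr0 mul1r.
by rewrite exprSr exprS mulrA -[_ * b * a]mulrA ba1 mulr1 IH ltnS subSS.
Qed.

Lemma proj_ab_sandwich_bXaX k m :
  proj_ab * (b ^+ k * a ^+ m) * proj_ab = if k == m then proj_ab else 0.
Proof.
rewrite bXaX; case: (ltngtP k m) => hkm.
- by rewrite proj_ab_aX ?subn_gt0 // mul0r.
- by rewrite -mulrA bX_proj_ab ?subn_gt0 // mulr0.
- by rewrite hkm subnn expr0 mulr1 proj_ab_idem.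
Qed.

Lemma proj_ab_sandwich_word k c d m :
  proj_ab * (b ^+ k * (a ^+ c * b ^+ d) * a ^+ m) * proj_ab =
  if [&& (c <= k)%N, (d <= m)%N & (k - c == m - d)%N] then proj_ab else 0.
Proof.
have -> : b ^+ k * (a ^+ c * b ^+ d) * a ^+ m = (b ^+ k * a ^+ c) * (b ^+ d * a ^+ m).
  by rewrite !mulrA.
rewrite [b ^+ k * _]bXaX; case: leqP => hck /=; last first.
  by rewrite [proj_ab * _]mulrA proj_ab_aX ?subn_gt0 // !mul0r.
rewrite [b ^+ (k - c) * _]mulrA -exprD proj_ab_sandwich_bXaX.
by congr (if _ then _ else _); apply/eqP/andP => [|[/eqP ? /eqP ?]]; lia.
Qed.
End OneSidedInverse.

(* A concrete representation of S_n: shift operators on K-valued functions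
   on multi-indices N^n.  It shows that the idempotent prod_i (1 - x_i y_i)
   is nonzero in S_n. *)
Section ShiftModel.
Variables (K : fieldType) (n : nat).

Definition multi_index := {ffun 'I_n -> nat}.
Definition mi0 : multi_index := [ffun => 0%N].
Local Notation V := (multi_index -> K).

Definition op_linear (f : V -> V) : Prop :=
  forall k u v m, f (fun m => k * u m + v m) m = k * f u m + f v m.

Definition Op := {f : V -> V | `[< op_linear f >]}.
HB.instance Definition _ := [isSub for @sval (V -> V) _ : Op -> _].
HB.instance Definition _ := [Choice of Op by <:].

Definition app (f : Op) : V -> V := sval f.
Definition mk_op (f : V -> V) (hf : op_linear f) : Op := exist _ f (introT (asboolP _) hf).

Lemma app_linear (f : Op) : op_linear (app f).
Proof. by case: f => f hf; apply/asboolP. Qed.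

Lemma op_ext (f g : Op) : (forall v m, app f v m = app g v m) -> f = g.
Proof. by move=> h; apply: val_inj; apply/funext => v; apply/funext => m; apply: h. Qed.

Lemma app_ext (f : Op) u v : u =1 v -> app f u =1 app f v.
Proof. by move=> /funext ->. Qed.

Lemma app0 (f : Op) m : app f (fun _ => 0) m = 0.
Proof.
have := app_linear f 1 (fun _ => 0) (fun _ => 0) m.
rewrite (@app_ext f _ (fun _ => 0)) => [/eqP|z]; last by rewrite mulr0 addr0.
by rewrite mul1r eq_sym -subr_eq0 addrK => /eqP.
Qed.

Lemma appD (f : Op) u v m : app f (fun m => u m + v m) m = app f u m + app f v m.
Proof. by rewrite -[app f u m]mul1r -app_linear; apply: app_ext => z; rewrite mul1r. Qed.

Lemma appZ (f : Op) k u m : app f (fun m => k * u m) m = k * app f u m.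
Proof. by rewrite -[RHS]addr0 -(app0 f m) -app_linear; apply: app_ext => z; rewrite addr0. Qed.

Definition op0 : Op := @mk_op (fun _ _ => 0) ltac:(by move=> *; rewrite mulr0 addr0).
Definition op1 : Op := @mk_op id ltac:(by []).
Definition opD (f g : Op) : Op := @mk_op (fun v m => app f v m + app g v m)
  ltac:(by move=> k u v m; rewrite !app_linear mulrDr addrACA).
Definition opN (f : Op) : Op := @mk_op (fun v m => - app f v m)
  ltac:(by move=> k u v m; rewrite app_linear opprD mulrN).
Definition opM (f g : Op) : Op := @mk_op (fun v => app f (app g v))
  ltac:(by move=> k u v m; rewrite (app_ext f (app_linear g k u v)) app_linear).
Definition opZ (c : K) (f : Op) : Op := @mk_op (fun v m => c * app f v m)
  ltac:(by move=> k u v m; rewrite app_linear mulrDr mulrCA).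

Lemma opDA : associative opD. Proof. by move=> *; apply: op_ext => * /=; rewrite addrA. Qed.
Lemma opDC : commutative opD. Proof. by move=> *; apply: op_ext => * /=; rewrite addrC. Qed.
Lemma op0D : left_id op0 opD. Proof. by move=> *; apply: op_ext => * /=; rewrite add0r. Qed.
Lemma opNK : left_inverse op0 opN opD.
Proof. by move=> *; apply: op_ext => * /=; rewrite addNr. Qed.
HB.instance Definition _ := GRing.isZmodule.Build Op opDA opDC op0D opNK.

Lemma opMA : associative opM. Proof. by move=> *; apply: op_ext. Qed.
Lemma op1M : left_id op1 opM. Proof. by move=> *; apply: op_ext. Qed.
Lemma opM1 : right_id op1 opM. Proof. by move=> *; apply: op_ext. Qed.
Lemma opMDl : left_distributive opM opD. Proof. by move=> *; apply: op_ext. Qed.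
Lemma opMDr : right_distributive opM opD.
Proof. by move=> f g h; apply: op_ext => v m /=; rewrite appD. Qed.
Lemma op1_neq0 : op1 != 0.
Proof. by apply/eqP => /(congr1 (fun f => app f (fun _ => 1) mi0)) /eqP; rewrite oner_eq0. Qed.
HB.instance Definition _ :=
  GRing.Zmodule_isNzRing.Build Op opMA op1M opM1 opMDl opMDr op1_neq0.

Lemma opZA a b f : opZ a (opZ b f) = opZ (a * b) f.
Proof. by apply: op_ext => * /=; rewrite mulrA. Qed.
Lemma opZ1 : left_id 1 opZ. Proof. by move=> *; apply: op_ext => * /=; rewrite mul1r. Qed.
Lemma opZDr : right_distributive opZ +%R.
Proof. by move=> *; apply: op_ext => * /=; rewrite mulrDr. Qed.
Lemma opZDl f : {morph opZ^~ f : a b / a + b}.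
Proof. by move=> *; apply: op_ext => * /=; rewrite mulrDl. Qed.
HB.instance Definition _ := GRing.Zmodule_isLmodule.Build K Op opZA opZ1 opZDr opZDl.
Lemma opZMl a (f g : Op) : a *: (f * g) = (a *: f) * g. Proof. by apply: op_ext. Qed.
HB.instance Definition _ := GRing.Lmodule_isLalgebra.Build K Op opZMl.
Lemma opZMr a (f g : Op) : a *: (f * g) = f * (a *: g).
Proof. by apply: op_ext => v m /=; rewrite appZ. Qed.
HB.instance Definition _ := GRing.Lalgebra_isAlgebra.Build K Op opZMr.

Definition raise (i : 'I_n) (m : multi_index) : multi_index :=
  [ffun j => if j == i then (m j).+1 else m j].
Definition lower (i : 'I_n) (m : multi_index) : multi_index :=
  [ffun j => if j == i then (m j).-1 else m j].

Lemma lower_raise i m : lower i (raise i m) = m.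
Proof. by apply/ffunP => j; rewrite !ffunE; case: eqP => [->|]; rewrite ?ffunE ?eqxx. Qed.
Lemma raiseC i j m : raise i (raise j m) = raise j (raise i m).
Proof. by apply/ffunP => k; rewrite !ffunE; do 2 case: eqP. Qed.
Lemma lowerC i j m : lower i (lower j m) = lower j (lower i m).
Proof. by apply/ffunP => k; rewrite !ffunE; do 2 case: eqP. Qed.
Lemma raise_lowerC i j m : i != j -> raise i (lower j m) = lower j (raise i m).
Proof. by move=> /negbTE h; apply/ffunP => k; rewrite !ffunE; case: eqP => [->|]; rewrite ?h. Qed.
Lemma raise_ne i j m : i != j -> raise i m j = m j.
Proof. by rewrite ffunE eq_sym => /negbTE ->. Qed.
Lemma lower_ne i j m : i != j -> lower i m j = m j.
Proof. by rewrite ffunE eq_sym => /negbTE ->. Qed.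

Definition shift_up (i : 'I_n) (v : V) (m : multi_index) : K :=
  if (0 < m i)%N then v (lower i m) else 0.
Definition shift_down (i : 'I_n) (v : V) (m : multi_index) : K := v (raise i m).

Definition shift_x (i : 'I_n) : Op :=
  @mk_op (shift_up i) ltac:(by move=> k u v m; rewrite /shift_up; case: ifP; rewrite ?mulr0 ?addr0).
Definition shift_y (i : 'I_n) : Op := @mk_op (shift_down i) ltac:(by []).

Lemma shift_relations : Sn_relations shift_x shift_y.
Proof.
split=> [i|i j hij].
  by apply: op_ext => v m /=; rewrite /shift_up /shift_down ffunE eqxx lower_raise.
have hji : j != i by rewrite eq_sym.
split; apply: op_ext => v m /=; rewrite /shift_up /shift_down.
- by rewrite (raise_ne _ hji) (raise_lowerC _ hji).
- rewrite (lower_ne _ hij) (lower_ne _ hji).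
  by case: (0 < m i)%N; case: (0 < m j)%N; rewrite // lowerC.
- by rewrite raiseC.
Qed.

(* prod_i (1 - x_i y_i) multiplies by the indicator of the zero multi-index. *)
Lemma shift_proj_neq0 : \prod_(i < n) proj_ab (shift_x i) (shift_y i) != 0.
Proof.
have at0 r : app (\prod_(i <- r) proj_ab (shift_x i) (shift_y i)) (fun _ => 1) mi0 = 1.
  by elim: r => [|i r IH]; rewrite ?big_nil // big_cons /= /shift_up /shift_down ffunE ltnn subr0.
apply/eqP => h; have := at0 (index_enum 'I_n).
by rewrite -[\prod_(i <- _) _]/(\prod_(i < n) _) h /= => /eqP; rewrite eq_sym oner_eq0.
Qed.
End ShiftModel.

Lemma seq_argmin (T : eqType) (f : T -> nat) (l : seq T) :
  l != [::] -> exists2 q, q \in l & forall q', q' \in l -> (f q <= f q')%N.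
Proof.
case: l => [|q1 l] // _.
have ex : exists m, has (fun q => f q == m) (q1 :: l) by exists (f q1); rewrite /= eqxx.
case: (ex_minnP ex) => m /hasP [q hq /eqP fq] hmin; exists q => // q' hq'.
by rewrite fq; apply: hmin; apply/hasP; exists q'.
Qed.

Lemma prod_single (R : nzRingType) (I : eqType) (r : seq I) j (a : R) :
  uniq r -> j \in r -> \prod_(i <- r) (if i == j then a else 1) = a.
Proof.
elim: r => [|i r IH] //= /andP [hi hu]; rewrite inE big_cons.
case: (eqVneq i j) => [eij _|nij /= hj]; last by rewrite mul1r IH.
rewrite big1_seq ?mulr1 // => k /andP [_ hk].
by case: eqP => // ek; move: hi; rewrite eij -ek hk.
Qed.

Section SnStructure.
Variables (K : fieldType) (n : nat) (S : algType K) (x y : 'I_n -> S).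
Hypothesis hS : is_Sn x y.

Lemma yx i : y i * x i = 1. Proof. by case: hS => [[h _] _]. Qed.

Lemma Sn_commute i j : i != j ->
  [/\ x i * y j = y j * x i, x i * x j = x j * x i & y i * y j = y j * y i].
Proof. by case: hS => [[_ h] _]; apply: h. Qed.

(* e is i-local when it commutes with everything commuting with x_i and y_i;
   this holds for all polynomials in x_i, y_i, and elements local at
   different indices commute. *)
Definition local (i : 'I_n) (e : S) :=
  forall u, GRing.comm u (x i) -> GRing.comm u (y i) -> GRing.comm u e.

Lemma local_x i : local i (x i). Proof. by []. Qed.
Lemma local_y i : local i (y i). Proof. by []. Qed.
Lemma local1 i : local i 1. Proof. by move=> u _ _; apply: commr1. Qed.
Lemma localM i e e' : local i e -> local i e' -> local i (e * e').
Proof. by move=> h h' u hx hy; apply: commrM; [apply: h | apply: h']. Qed.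
Lemma localB i e e' : local i e -> local i e' -> local i (e - e').
Proof. by move=> h h' u hx hy; apply: commrB; [apply: h | apply: h']. Qed.
Lemma localX i e k : local i e -> local i (e ^+ k).
Proof. by move=> h u hx hy; apply: commrX; apply: h. Qed.
Lemma local_xy i a b : local i (x i ^+ a * y i ^+ b).
Proof. by apply: localM; apply: localX; [apply: local_x | apply: local_y]. Qed.

Lemma local_comm i j e e' : i != j -> local i e -> local j e' -> GRing.comm e e'.
Proof.
move=> hij he he'; have hji : j != i by rewrite eq_sym.
have [xy_ij xx_ij yy_ij] := Sn_commute hij.
have [xy_ji _ _] := Sn_commute hji.
have e'x : GRing.comm e' (x i) by apply/commr_sym; apply: he'.
have e'y : GRing.comm e' (y i).
  by apply/commr_sym; apply: he'; [rewrite /GRing.comm xy_ji | exact: yy_ij].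
by apply/commr_sym; apply: he.
Qed.

Lemma prod_local_mul (r : seq 'I_n) (F G : 'I_n -> S) :
  uniq r -> (forall i, local i (F i)) -> (forall i, local i (G i)) ->
  (\prod_(i <- r) F i) * (\prod_(i <- r) G i) = \prod_(i <- r) (F i * G i).
Proof.
move=> + hF hG; elim: r => [|i r IH]; first by rewrite !big_nil mulr1.
rewrite /= => /andP [hi hu]; rewrite !big_cons -IH //.
have hc : GRing.comm (G i) (\prod_(k <- r) F k).
  rewrite big_seq; apply: commr_prod => k hk.
  by apply/commr_sym; apply: (local_comm _ (hF k) (hG i)); apply: contraNneq hi => <-.
by rewrite -mulrA (mulrA _ (G i)) -hc !mulrA.
Qed.

Lemma prod_enum_mul (F G : 'I_n -> S) :
  (forall i, local i (F i)) -> (forall i, local i (G i)) ->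
  (\prod_(i < n) F i) * (\prod_(i < n) G i) = \prod_(i < n) (F i * G i).
Proof. exact: prod_local_mul (index_enum_uniq _). Qed.

Definition proj_i (i : 'I_n) := proj_ab (x i) (y i).
Definition projS := \prod_(i < n) proj_i i.

Lemma local_proj i : local i (proj_i i).
Proof. by apply: localB; [apply: local1 | apply: localM; [apply: local_x | apply: local_y]]. Qed.

Lemma projS_idem : projS * projS = projS.
Proof.
rewrite prod_enum_mul; try exact: local_proj.
by apply: eq_bigr => i _; rewrite (proj_ab_idem (yx i)).
Qed.

Definition monomial (g d : multi_index n) := \prod_(i < n) (x i ^+ g i * y i ^+ d i).
Definition left_word (al : multi_index n) := \prod_(i < n) (proj_i i * y i ^+ al i).
Definition right_word (be : multi_index n) := \prod_(i < n) (x i ^+ be i * proj_i i).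

(* The monomial x^g y^d survives compression by (al, be) iff this holds. *)
Definition survives (al be g d : multi_index n) :=
  all (fun i => [&& (g i <= al i)%N, (d i <= be i)%N & (al i - g i == be i - d i)%N])
      (index_enum 'I_n).

Lemma prod_if_proj (c : 'I_n -> bool) :
  \prod_(i < n) (if c i then proj_i i else 0) = if all c (index_enum 'I_n) then projS else 0.
Proof.
rewrite /projS; elim: (index_enum 'I_n) => [|i r IH]; first by rewrite !big_nil.
by rewrite !big_cons /= IH; case: (c i); case: (all c r); rewrite ?mulr0 ?mul0r.
Qed.

Lemma compress_monomial al be g d :
  left_word al * monomial g d * right_word be = if survives al be g d then projS else 0.
Proof.
have local_l i : local i (proj_i i * y i ^+ al i).
  by apply: localM; [apply: local_proj | apply: localX; apply: local_y].
have local_r i : local i (x i ^+ be i * proj_i i).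
  by apply: localM; [apply: localX; apply: local_x | apply: local_proj].
rewrite /left_word /monomial prod_enum_mul //; last by move=> i; apply: local_xy.
rewrite /right_word prod_enum_mul //; last first.
  by move=> i; apply: localM; [apply: local_l | apply: local_xy].
rewrite -prod_if_proj; apply: eq_bigr => i _.
by rewrite -(proj_ab_sandwich_word (yx i)) !mulrA.
Qed.

Lemma mul_prod_local j (a : S) (F : 'I_n -> S) : local j a -> (forall i, local i (F i)) ->
  a * \prod_(i < n) F i = \prod_(i < n) (if i == j then a * F i else F i).
Proof.
move=> ha hF; rewrite -{1}(@prod_single _ _ (index_enum 'I_n) j a);
  rewrite ?index_enum_uniq ?mem_index_enum //.
rewrite prod_enum_mul //.
  by apply: eq_bigr => i _; case: eqP => _; rewrite ?mul1r.
by move=> i; case: eqP => [->|_]; [exact: ha | exact: local1].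
Qed.

Lemma x_monomial j g d : x j * monomial g d = monomial (raise j g) d.
Proof.
rewrite /monomial (@mul_prod_local j _ _ (@local_x j)) //; last by move=> i; apply: local_xy.
by apply: eq_bigr => i _; rewrite ffunE; case: eqP => [->|] //; rewrite mulrA -exprS.
Qed.

Lemma y_monomial j g d : y j * monomial g d =
  if (0 < g j)%N then monomial (lower j g) d else monomial g (raise j d).
Proof.
rewrite /monomial (@mul_prod_local j _ _ (@local_y j)) //; last by move=> i; apply: local_xy.
case: (posnP (g j)) => hg; apply: eq_bigr => i _; rewrite ffunE; case: eqP => [->|] //.
  by rewrite hg expr0 !mul1r -exprS.
by rewrite mulrA; case: (g j) hg => // k _; rewrite exprS mulrA yx mul1r.
Qed.

Definition comb (l : seq (K * multi_index n * multi_index n)) :=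
  \sum_(q <- l) q.1.1 *: monomial q.1.2 q.2.

Lemma comb_cat l l' : comb (l ++ l') = comb l + comb l'.
Proof. exact: big_cat. Qed.

Lemma comb_scale k l : k *: comb l = comb [seq (k * q.1.1, q.1.2, q.2) | q <- l].
Proof. by rewrite /comb big_map scaler_sumr; apply: eq_bigr => q _; rewrite scalerA. Qed.

Lemma comb_monomial g d : monomial g d = comb [:: (1, g, d)].
Proof. by rewrite /comb big_seq1 scale1r. Qed.

Lemma comb_mull (u : S) : (forall g d, exists l, u * monomial g d = comb l) ->
  forall l, exists l', u * comb l = comb l'.
Proof.
move=> hu; elim=> [|q l [l' IH]]; first by exists [::]; rewrite /comb !big_nil mulr0.
have [l1 e1] := hu q.1.2 q.2; exists ([seq (q.1.1 * q'.1.1, q'.1.2, q'.2) | q' <- l1] ++ l').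
by rewrite comb_cat -IH -comb_scale -e1 /comb big_cons mulrDr scalerAr.
Qed.

(* The monomials span S_n: the elements u such that u * comb l is again a
   combination of monomials form a subalgebra containing the generators. *)
Lemma Sn_span s : exists l, s = comb l.
Proof.
suff left_mul u l : exists l', u * comb l = comb l'.
  have [l' e] := left_mul s [:: (1, mi0 n, mi0 n)]; exists l'.
  by rewrite -e -comb_monomial /monomial big1 ?mulr1 // => i _; rewrite !ffunE !expr0 mulr1.
elim/(Sn_ind hS): u l => [l|l|u v hu hv l|k u hu l|u v hu hv l|i|i].
- by exists l; rewrite mul1r.
- by exists [::]; rewrite mul0r /comb big_nil.
- have [l1 e1] := hu l; have [l2 e2] := hv l.
  by exists (l1 ++ l2); rewrite mulrDl e1 e2 comb_cat.
- have [l1 e1] := hu l; exists [seq (k * q.1.1, q.1.2, q.2) | q <- l1].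
  by rewrite -scalerAl e1 comb_scale.
- by have [l2 e2] := hv l; have [l1 e1] := hu l2; exists l1; rewrite -mulrA e2.
- by apply: comb_mull => g d; rewrite x_monomial; eexists; exact: comb_monomial.
- apply: comb_mull => g d; rewrite y_monomial.
  by case: ifP => _; eexists; exact: comb_monomial.
Qed.

(* e is nonzero: in the shift model it is the indicator of the zero index. *)
Lemma projS_neq0 : projS != 0.
Proof.
have [_ hU] := hS; have [f [hf fgen _]] := hU _ _ _ (shift_relations K n).
apply: contraNneq (shift_proj_neq0 K n) => e0.
rewrite -(klinear0 (alg_morph_klinear hf)) -e0 /projS (alg_morph_prod hf).
apply/eqP/eq_bigr => i _; rewrite /proj_i /proj_ab (klinearB (alg_morph_klinear hf)).
by rewrite (alg_morph1 hf) (alg_morphM hf); case: (fgen i) => -> ->.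
Qed.

Lemma scale_projS_inj (c c' : K) : c *: projS = c' *: projS -> c = c'.
Proof.
by move/eqP; rewrite -subr_eq0 -scalerBl scaler_eq0 (negbTE projS_neq0) orbF subr_eq0 => /eqP.
Qed.

Lemma compress_comb al be l : left_word al * comb l * right_word be =
  (\sum_(q <- l) q.1.1 * (survives al be q.1.2 q.2)%:R) *: projS.
Proof.
rewrite /comb mulr_sumr mulr_suml scaler_suml; apply: eq_bigr => q _.
rewrite -scalerAr -scalerAl compress_monomial -scalerA.
by case: survives; rewrite ?scale1r ?scale0r.
Qed.

Lemma compress_ex al be s : exists c : K, left_word al * s * right_word be == c *: projS.
Proof. by have [l ->] := Sn_span s; eexists; rewrite compress_comb. Qed.

Definition coeff al be s := xchoose (compress_ex al be s).

Lemma coeffP al be s : left_word al * s * right_word be = coeff al be s *: projS.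
Proof. exact/eqP/(xchooseP (compress_ex al be s)). Qed.

Lemma coeff_uniq al be s c : left_word al * s * right_word be = c *: projS -> coeff al be s = c.
Proof. by rewrite coeffP => /scale_projS_inj. Qed.

Lemma coeff_linear al be k s s' : coeff al be (k *: s + s') = k * coeff al be s + coeff al be s'.
Proof.
by apply: coeff_uniq; rewrite mulrDr mulrDl -scalerAr -scalerAl !coeffP scalerDl scalerA.
Qed.

Lemma coeff_comb al be l :
  coeff al be (comb l) = \sum_(q <- l) q.1.1 * (survives al be q.1.2 q.2)%:R.
Proof. by apply: coeff_uniq; rewrite compress_comb. Qed.

Lemma coeff_projS : coeff (mi0 n) (mi0 n) projS = 1.
Proof.
apply: coeff_uniq; rewrite scale1r /left_word /right_word.
rewrite (eq_bigr (fun i => proj_i i)) => [|i _]; last by rewrite ffunE expr0 mulr1.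
rewrite [X in _ * X](eq_bigr (fun i => proj_i i)) => [|i _]; last by rewrite ffunE expr0 mul1r.
by rewrite projS_idem projS_idem.
Qed.

(* Compression by the exponents (al, be) only catches monomials of degree at
   most that of x^al y^be, and among those only x^al y^be itself. *)
Definition degree (g d : multi_index n) := (\sum_(i < n) (g i + d i))%N.

Lemma survives_refl al be : survives al be al be.
Proof. by apply/allP => i _; rewrite !leqnn !subnn. Qed.

Lemma survives_eq al be g d : survives al be g d ->
  (degree al be <= degree g d)%N -> g = al /\ d = be.
Proof.
move=> /allP hc hw.
have hc' i : [&& g i <= al i, d i <= be i & al i - g i == be i - d i]%N.
  by apply: hc; rewrite mem_index_enum.
have hle i : (g i + d i <= al i + be i)%N by have /and3P [h1 h2 _] := hc' i; apply: leq_add.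
have /forall_inP heq : [forall (i | true), g i + d i == al i + be i]%N.
  rewrite -(leqif_sum (fun i _ => leqif_eq (hle i))).2 eqn_leq hw andbT.
  by apply: leq_sum => i _; apply: hle.
by split; apply/ffunP => i; have /and3P [h1 h2 /eqP h3] := hc' i; have /eqP h4 := heq i isT;
  move: (g i) (al i) (d i) (be i) h1 h2 h3 h4 => *; lia.
Qed.

(* The coefficient forms separate points: induct on the number of terms of a
   combination, and compress by a monomial of minimal degree occurring in it;
   the terms on that monomial cancel, the others form a shorter combination. *)
Lemma comb_eq0 l : (forall al be, coeff al be (comb l) = 0) -> comb l = 0.
Proof.
elim: {l}(size l) {-2}l (leqnn (size l)) => [|N IH] l hsz hcoeff.
  by move: hsz; rewrite leqn0 => /nilP ->; rewrite /comb big_nil.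
have [->|l_neq0] := eqVneq l [::]; first by rewrite /comb big_nil.
have [q0 hq0 q0_min] := seq_argmin (fun q => degree q.1.2 q.2) l_neq0.
pose same (q : K * multi_index n * multi_index n) := (q.1.2 == q0.1.2) && (q.2 == q0.2).
have survives_same q : q \in l -> survives q0.1.2 q0.2 q.1.2 q.2 = same q.
  move=> hq; apply/idP/andP => [/survives_eq /(_ (q0_min q hq)) [-> ->]//|].
  by case=> /eqP -> /eqP ->; apply: survives_refl.
have same_sum : \sum_(q <- l | same q) q.1.1 = 0.
  rewrite -[RHS](hcoeff q0.1.2 q0.2) coeff_comb big_mkcond [LHS]big_seq [RHS]big_seq.
  by apply: eq_bigr => q hq; rewrite survives_same //; case: (same q); rewrite ?mulr1 ?mulr0.
have drop_same : comb l = comb [seq q <- l | ~~ same q].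
  rewrite /comb (bigID same) /= big_filter.
  rewrite (eq_bigr (fun q => q.1.1 *: monomial q0.1.2 q0.2)); last first.
    by move=> q /andP [/eqP -> /eqP ->].
  by rewrite -scaler_suml same_sum scale0r add0r.
rewrite drop_same; apply: IH => [|al be]; last by rewrite -drop_same.
have same_pos : (0 < count same l)%N.
  by rewrite -has_count; apply/hasP; exists q0; rewrite // /same !eqxx.
rewrite size_filter; change (count (predC same) l <= N)%N.
by have := count_predC same l; lia.
Qed.

Lemma coeff_sep s : (forall al be, coeff al be s = 0) -> s = 0.
Proof. by have [l ->] := Sn_span s; apply: comb_eq0. Qed.
End SnStructure.

Section TensorStructure.
Variables (K : fieldType) (n : nat) (S A T : algType K) (x y : 'I_n -> S).
Hypothesis hS : is_Sn x y.
Variables (iS : S -> T) (iA : A -> T).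
Hypothesis hT : is_tensor_alg iS iA.

Local Notation "s \ox a" := (iS s * iA a) (at level 40, no associativity).
Local Notation e := (projS x y).

Lemma iS_morph : alg_morph iS. Proof. by case: hT. Qed.
Lemma iA_morph : alg_morph iA. Proof. by case: hT. Qed.
Lemma iA_iS_comm s a : iA a * iS s = iS s * iA a. Proof. by case: hT => _ _ h _; rewrite h. Qed.

Lemma tens_linl a : klinear (fun s => s \ox a).
Proof. by move=> k u v; rewrite (alg_morph_klinear iS_morph) mulrDl scalerAl. Qed.
Lemma tens_linr s : klinear (fun a => s \ox a).
Proof. by move=> k u v; rewrite (alg_morph_klinear iA_morph) mulrDr scalerAr. Qed.

Lemma tensM s a s' a' : (s \ox a) * (s' \ox a') = (s * s') \ox (a * a').
Proof.
by rewrite (alg_morphM iS_morph) (alg_morphM iA_morph) mulrA -(mulrA (iS s)) iA_iS_comm !mulrA.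
Qed.

Definition tsum (l : seq (S * A)) := \sum_(q <- l) q.1 \ox q.2.

Lemma tensor_span t : exists l, t = tsum l.
Proof.
elim/(tensor_ind hT): t => [|u v [l1 ->] [l2 ->]|k u [l ->]|s a].
- by exists [::]; rewrite /tsum big_nil.
- by exists (l1 ++ l2); rewrite /tsum big_cat.
- exists [seq (k *: q.1, q.2) | q <- l]; rewrite /tsum big_map scaler_sumr.
  by apply: eq_bigr => q _; rewrite (klinearZ (tens_linl _)).
- by exists [:: (s, a)]; rewrite /tsum big_seq1.
Qed.

Lemma coeffT_ex al be :
  exists g : T -> A, klinear g /\ forall s a, g (s \ox a) = coeff hS al be s *: a.
Proof.
case: hT => _ _ _ hU; have [|g [g_lin g_tens _]] := hU A (fun s a => coeff hS al be s *: a).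
  split=> [a|s] k u v; first by rewrite coeff_linear scalerDl scalerA.
  by rewrite scalerDr scalerA mulrC -scalerA.
by exists g.
Qed.

Definition coeffT al be : T -> A := sval (cid (coeffT_ex al be)).

Lemma coeffT_linear al be : klinear (coeffT al be).
Proof. exact: (svalP (cid (coeffT_ex al be))).1. Qed.

Lemma coeffT_tens al be s a : coeffT al be (s \ox a) = coeff hS al be s *: a.
Proof. exact: (svalP (cid (coeffT_ex al be))).2. Qed.

Lemma coeffT_tsum al be l : coeffT al be (tsum l) = \sum_(q <- l) coeff hS al be q.1 *: q.2.
Proof.
by rewrite (klinear_sum (coeffT_linear al be)); apply: eq_bigr => q _; rewrite coeffT_tens.
Qed.

Lemma compress_tensor al be t :
  iS (left_word x y al) * t * iS (right_word x y be) = e \ox coeffT al be t.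
Proof.
have [l ->] := tensor_span t; rewrite coeffT_tsum (klinear_sum (tens_linr _)).
rewrite mulr_sumr mulr_suml; apply: eq_bigr => q _.
rewrite mulrA -mulrA iA_iS_comm mulrA -!(alg_morphM iS_morph) (coeffP hS).
by rewrite (klinearZ (tens_linl _)) (klinearZ (tens_linr _)).
Qed.

Local Notation W p := (tensor_ideal iS iA p).

Lemma W0 p : W p 0. Proof. by exists [::]; rewrite big_nil. Qed.

Lemma WD p u v : W p u -> W p v -> W p (u + v).
Proof.
case=> [l1 [h1 ->]] [l2 [h2 ->]]; exists (l1 ++ l2); rewrite big_cat; split => //.
by move=> q; rewrite mem_cat => /orP [/h1|/h2].
Qed.

Lemma W_tens (p : A -> Prop) s a : p a -> W p (s \ox a).
Proof.
by move=> h; exists [:: (s, a)]; rewrite big_seq1; split => // q; rewrite inE => /eqP ->.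
Qed.

Lemma W_sum p (I : eqType) (r : seq I) (F : I -> T) :
  (forall i, i \in r -> W p (F i)) -> W p (\sum_(i <- r) F i).
Proof.
elim: r => [|i r IH] h; first by rewrite big_nil; exact: W0.
rewrite big_cons; apply: WD; first by apply: h; rewrite mem_head.
by apply: IH => j hj; apply: h; rewrite in_cons hj orbT.
Qed.

Lemma W_full t : W (fun _ => True) t.
Proof. by have [l ->] := tensor_span t; exists l. Qed.

Lemma W_mul (p1 p2 p3 : A -> Prop) (h : forall a b, p1 a -> p2 b -> p3 (a * b)) u v :
  W p1 u -> W p2 v -> W p3 (u * v).
Proof.
case=> [l1 [h1 ->]] [l2 [h2 ->]].
rewrite mulr_suml; apply: W_sum => q hq; rewrite mulr_sumr; apply: W_sum => q' hq'.
by rewrite tensM; apply: W_tens; apply: h; [apply: h1 | apply: h2].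
Qed.

Lemma W_ideal p : is_ideal p -> is_ideal (W p).
Proof.
move=> hp; split; [exact: W0 | exact: WD |] => r t ht; split.
  by apply: (W_mul (p1 := fun _ => True)) (W_full r) ht => a b _; apply: idealMl.
by apply: (W_mul (p2 := fun _ => True)) ht (W_full r) => a b + _; apply: idealMr.
Qed.

Lemma W_coeffT p : is_ideal p -> forall t, W p t -> forall al be, p (coeffT al be t).
Proof.
move=> hp t [l [hl ->]] al be; rewrite -/(tsum l) coeffT_tsum.
by apply: ideal_sum => // q hq; apply: idealZ => //; apply: hl.
Qed.

(* Conversely, t lies in S_n (x) p as soon as all its coefficients do: write
   t = sum s_k (x) a_k, pick a coefficient form with coeff s_1 = c != 0 and
   peel off s_1 (x) c^-1 coeffT t, which lies in S_n (x) p, leaving a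
   shorter sum. *)
Lemma coeffT_W p : is_ideal p -> forall t, (forall al be, p (coeffT al be t)) -> W p t.
Proof.
move=> hp t0; have [l ->] := tensor_span t0.
elim: {l}(size l) {-2}l (leqnn (size l)) => [|N IH] l.
  by rewrite leqn0 => /nilP -> _; rewrite /tsum big_nil; apply: W0.
case: l => [|[s a] l] hsz hcoeff; first by rewrite /tsum big_nil; apply: W0.
have {}hsz : (size l <= N)%N by [].
have [s0|s_neq0] := eqVneq s 0.
  have e0 : tsum ((s, a) :: l) = tsum l.
    by rewrite /tsum big_cons /= s0 (klinear0 (alg_morph_klinear iS_morph)) mul0r add0r.
  by rewrite e0; apply: IH => // al be; rewrite -e0.
have [al /existsNP [be /eqP c_neq0]] : exists al, ~ forall be, coeff hS al be s = 0.
  by apply/existsNP => h; apply: (negP s_neq0); apply/eqP; exact: coeff_sep h.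
set c := coeff hS al be s in c_neq0; set t := tsum _.
pose b := c^-1 *: coeffT al be t.
pose l' := [seq (q.1 - (c^-1 * coeff hS al be q.1) *: s, q.2) | q <- l].
have pb : p b by apply: idealZ => //; apply: hcoeff.
have et : t = s \ox b + tsum l'.
  rewrite /t /b coeffT_tsum /tsum big_cons /= big_map big_cons /= -/c.
  rewrite (klinearZ (tens_linr _)) (klinearD (tens_linr _)) (klinearZ (tens_linr _)).
  rewrite scalerDr scalerA mulVf // scale1r (klinear_sum (tens_linr _)) scaler_sumr -addrA.
  congr (_ + _); rewrite -big_split /=; apply: eq_bigr => q _.
  rewrite (klinearB (tens_linl _)) (klinearZ (tens_linl _)) (klinearZ (tens_linr _)).
  by rewrite scalerA addrC subrK.
rewrite et; apply: WD; first exact: W_tens.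
apply: IH; first by rewrite size_map.
have -> : tsum l' = t - s \ox b by rewrite et addrC addKr.
move=> al' be'; rewrite (klinearB (coeffT_linear _ _)) coeffT_tens.
by apply: idealB => //; apply: idealZ.
Qed.

Lemma W_projS p a : is_ideal p -> W p (e \ox a) -> p a.
Proof.
move=> hp /(W_coeffT hp) /(_ (mi0 n) (mi0 n)).
by rewrite coeffT_tens (coeff_projS hS) scale1r.
Qed.

Lemma ideal_pullback (L : T -> Prop) : is_ideal L -> is_ideal (fun a => L (e \ox a)).
Proof.
move=> [L0 LD LM]; split=> [|a b|r a La].
- by rewrite (klinear0 (tens_linr _)).
- by rewrite (klinearD (tens_linr _)); apply: LD.
- by rewrite -[e](projS_idem hS) -!tensM; split; [apply: (LM _ _ La).1 | apply: (LM _ _ La).2].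
Qed.

Lemma ideal_prod_pullback (I J : T -> Prop) a :
  ideal_prod (fun a => I (e \ox a)) (fun a => J (e \ox a)) a -> ideal_prod I J (e \ox a).
Proof.
case=> l [hl ->]; exists [seq (e \ox q.1, e \ox q.2) | q <- l]; split.
  by move=> q /mapP [q' /hl hq' ->].
rewrite big_map (klinear_sum (tens_linr _)).
by apply: eq_bigr => q _ /=; rewrite tensM (projS_idem hS).
Qed.

(* Part (2), forward direction: compressing elements of I and J outside
   S_n (x) p produces elements e (x) a, e (x) b whose A-components exhibit
   ideals of A not contained in p whose product is. *)
Lemma tensor_ideal_prime p : is_ideal p -> prime_ideal p -> prime_ideal (W p).
Proof.
move=> hp [_ p_proper p_prime]; split; first exact: W_ideal.
  move=> W_all; apply: p_proper => a; rewrite -[a]mulr1.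
  by apply: idealMl => //; apply: W_projS (W_all _).
move=> I J hI hJ hIJ.
have outside (L : T -> Prop) : is_ideal L -> ~ Defs.subpred L (W p) ->
    exists al be t, L t /\ ~ p (coeffT al be t).
  move=> hL /existsNP [t /not_implyP [Lt nWt]].
  have /existsNP [al /existsNP [be nc]] : ~ forall al be, p (coeffT al be t).
    by move=> hc; apply: nWt; apply: coeffT_W.
  by exists al, be, t.
have [|/(outside _ hI) [al1 [be1 [t1 [It1 n1]]]]] := pselect (Defs.subpred I (W p)); first by left.
have [|/(outside _ hJ) [al2 [be2 [t2 [Jt2 n2]]]]] := pselect (Defs.subpred J (W p)); first by right.
have compressed (L : T -> Prop) al be t : is_ideal L -> L t -> L (e \ox coeffT al be t).
  by move=> [_ _ LM] Lt; rewrite -compress_tensor; apply: (LM _ _ (LM _ _ Lt).1).2.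
have prod_in_p : Defs.subpred (ideal_prod (fun a => I (e \ox a)) (fun a => J (e \ox a))) p.
  by move=> a /ideal_prod_pullback /hIJ; apply: W_projS.
case: (p_prime _ _ (ideal_pullback hI) (ideal_pullback hJ) prod_in_p) => h; exfalso.
  by apply: n1; apply: h; apply: compressed.
by apply: n2; apply: h; apply: compressed.
Qed.

(* Part (2), backward direction: I |-> S_n (x) I preserves products and,
   through e (x) -, reflects containment in S_n (x) p. *)
Lemma prime_of_tensor_ideal p : is_ideal p -> prime_ideal (W p) -> prime_ideal p.
Proof.
move=> hp [hW W_proper W_prime]; split => //.
  by move=> p_all; apply: W_proper => t; have [l ->] := tensor_span t; exists l.
move=> I J hI hJ hIJ.
have prod_in_W : Defs.subpred (ideal_prod (W I) (W J)) (W p).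
  move=> t [l [hl ->]]; apply: W_sum => q /hl [h1 h2].
  apply: (W_mul _ h1 h2) => a b ha hb; apply: hIJ.
  by exists [:: (a, b)]; rewrite big_seq1; split => // q'; rewrite inE => /eqP ->.
case: (W_prime _ _ (W_ideal hI) (W_ideal hJ) prod_in_W) => h; [left | right] => a ha;
  by apply: (W_projS hp); apply: h; apply: W_tens.
Qed.

Lemma tensor_ideal0 : W (fun a : A => a = 0) = (fun t : T => t = 0).
Proof.
apply/funext => t; apply/propext; split; last by move=> ->; exact: W0.
case=> l [hl ->]; rewrite big_seq big1 // => q /hl ->.
exact: (klinear0 (tens_linr _)).
Qed.
End TensorStructure.

Lemma zero_ideal (K : fieldType) (A : algType K) : is_ideal (fun a : A => a = 0).
Proof. by split=> [|a b -> ->|r a ->]; rewrite ?addr0 ?mulr0 ?mul0r. Qed.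

Unset Implicit Arguments.

Theorem proposition4p3 (K : fieldType) (A : algType K) (n : nat) (hn : (1 <= n)%N)
    (S : algType K) (x y : 'I_n -> S) (hS : is_Sn x y)
    (T : algType K) (iS : S -> T) (iA : A -> T) (hT : is_tensor_alg iS iA) :
  (prime_ring T <-> prime_ring A) /\
  (forall p : A -> Prop, is_ideal p ->
     (prime_ideal p <-> prime_ideal (tensor_ideal iS iA p))).
Proof.
have part2 p : is_ideal p -> prime_ideal p <-> prime_ideal (tensor_ideal iS iA p).
  move=> hp; split; first exact: (tensor_ideal_prime hS hT hp).
  exact: (prime_of_tensor_ideal hS hT hp).
split=> //; rewrite /prime_ring -(tensor_ideal0 hT).
by split=> /part2; apply; exact: zero_ideal.
Qed.
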